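(* Consider NSGA-III (as defined in the context) with parameter $\varepsilon_{\mathrm{nad}}\ge f_{\max}$, run on an arbitrary function $f:\{0,1\}^n\to\mathbb N_0^m$, with any population size $\mu$, any reference set $\mathcal R_p$, any initial population and any rule for choosing the extreme points. Then in every generation $t$, after the normalization step, for every $x\in R_t$ and every $j\in[m]$ we have $0\le f^n_j(x)\le 1$ and $y^{\mathrm{nad}}_j-y^{\min}_j\le f_{\max}$.
   Context: Let $f=(f_1,\dots,f_m):\{0,1\}^n\to\mathbb N_0^m$ be an $m$-objective function to be maximized, and $f_{\max}:=\max\{f_j(x): x\in\{0,1\}^n, j\in[m]\}$, assumed $\ge 1$. For $x,y\in\{0,1\}^n$: $x\succeq y$ ($x$ weakly dominates $y$) iff $f_j(x)\ge f_j(y)$ for all $j$; $x\succ y$ iff $x\succeq y$ and $f_j(x)>f_j(y)$ for some $j$; $x,y$ are incomparable if neither $x\succeq y$ nor $y\succeq x$. For $p\in\mathbb N$ the reference set is $\mathcal R_p=\{(a_1/p,\dots,a_m/p): (a_1,\dots,a_m)\in\mathbb N_0^m,\ \sum_i a_i=p\}$. NSGA-III with population size $\mu$, threshold $\varepsilon_{\mathrm{nad}}>0$ and reference set $\mathcal R_p$: start with a population $P_0$ (a multiset of $\mu$ bit strings; arbitrary), $E_0=\{(-\infty,\dots,-\infty)\}$, $y^{\max}=(-\infty,\dots,-\infty)$, $y^{\min}=(+\infty,\dots,+\infty)$. In generation $t=0,1,2,\dots$: (1) Offspring: $Q_t$ consists of $\mu$ offspring, each created independently by choosing a parent uniformly at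 random from $P_t$ and flipping each of its bits independently with probability $1/n$. (2) Sorting: $R_t=P_t\cup Q_t$ (multiset of size $2\mu$) is partitioned into layers $F^1_t,\dots,F^k_t$, where $F^1_t$ consists of the members of $R_t$ not dominated (w.r.t. $\succ$) by any member of $R_t$, and $F^i_t$ consists of the members of $R_t\setminus(F^1_t\cup\dots\cup F^{i-1}_t)$ not dominated by any member of that set. Let $i^*$ be the index with $\sum_{i<i^*}|F^i_t|<\mu\le\sum_{i\le i^*}|F^i_t|$, and $Y_t=\bigcup_{i<i^*}F^i_t$. (3) Normalization: for each $j$, set $y^{\min}_j\leftarrow\min(y^{\min}_j,\min_{x\in R_t}f_j(x))$ and $y^{\max}_j\leftarrow\max(y^{\max}_j,\max_{x\in F^1_t}f_j(x))$ (so these are running extremes over all generations so far), and choose an extreme point $e^{(j)}\in f(Y_t\cup F^{i^*}_t)\cup E_t$ by some fixed rule (originally via an achievement scalarization function); set $E_{t+1}=\{e^{(1)},\dots,e^{(m)}\}$. If $e^{(1)},\dots,e^{(m)}$ are linearly independent, let $H$ be the affine hyperplane through them; if for every $j$ the hyperplane $H$ meets the $j$-th coordinate axis in exactly one point $I_j u_j$ ($u_j$ the $j$-th unit vector) with $\varepsilon_{\mathrm{nad}}\le I_j\le y^{\max}_j$, set $y^{\mathrm{nad}}_j=I_j$ for all $j$. Otherwise (including linear dependence) set $y^{\mathrm{nad}}_j=\max_{x\in F^1_t}f_j(x)$ for all $j$. Afterwards, for every $j$ with $y^{\mathrm{nad}}_j<y^{\min}_j+\varepsilon_{\mathrm{nad}}$,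 reset $y^{\mathrm{nad}}_j=\max_{x\in R_t}f_j(x)$. The normalized objectives are $f^n_j(x)=(f_j(x)-y^{\min}_j)/(y^{\mathrm{nad}}_j-y^{\min}_j)$ (with the convention $f^n_j(x):=0$ if the denominator is $0$), $f^n=(f^n_1,\dots,f^n_m)$. (4) Association: each $x\in Y_t\cup F^{i^*}_t$ is associated with a reference point $\mathrm{rp}(x)\in\mathcal R_p$ minimizing the Euclidean distance from $f^n(x)$ to the line $\{\lambda r:\lambda\in\mathbb R\}$ (equivalently, minimizing the angle between $f^n(x)$ and $r$); ties are broken by a deterministic rule depending only on $f^n(x)$. (5) Selection: let $\rho_r=|\{x\in Y_t:\mathrm{rp}(x)=r\}|$ for $r\in\mathcal R_p$, $\tilde F=\emptyset$, $R'=\mathcal R_p$. Repeat: choose $r\in R'$ with minimal $\rho_r$ (ties uniformly at random); if some $x\in F^{i^*}_t\setminus\tilde F$ has $\mathrm{rp}(x)=r$, add to $\tilde F$ such an $x$ minimizing the distance between $f^n(x)$ and $r$ (ties uniformly at random), increase $\rho_r$ by one, and stop as soon as $|Y_t|+|\tilde F|=\mu$; otherwise remove $r$ from $R'$. Set $P_{t+1}=Y_t\cup\tilde F$. *)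

From HB Require Import structures.
From mathcomp Require Import all_boot all_order all_algebra.
From mathcomp Require Import reals.
Set Implicit Arguments. Unset Strict Implicit. Unset Printing Implicit Defensive.
Import Order.TTheory GRing.Theory Num.Theory.
Local Open Scope ring_scope.

Definition bits (n : nat) := {ffun 'I_n -> bool}.
Definition bits0 (n : nat) : bits n := [ffun _ => false].
(* reference point a/p with a : 'I_m -> {0..p}; in R_p iff sum a = p *)
Definition refidx (m p : nat) := {ffun 'I_m -> 'I_p.+1}.

Section NSGA3.
Variable R : realType.
Variables (n m mu p : nat) (f : bits n -> 'I_m -> nat) (eps : R).

Definition fmax : nat := \max_(x : bits n) \max_(j < m) f x j.

Definition wdom (x y : bits n) : bool := [forall j, f y j <= f x j]%N.
Definition sdom (x y : bits n) : bool := wdom x y && [exists j, f y j < f x j]%N.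

Fixpoint fronts_fuel (k : nat) (S : seq (bits n)) : seq (seq (bits n)) :=
  match k with
  | 0 => [::]
  | k'.+1 =>
    match S with
    | [::] => [::]
    | _ => [seq x <- S | ~~ has (fun y => sdom y x) S]
           :: fronts_fuel k' [seq x <- S | has (fun y => sdom y x) S]
    end
  end.
Definition fronts (S : seq (bits n)) := fronts_fuel (size S) S.

(* (Y, F^{i*}) : Y = union of layers before the critical layer F^{i*} *)
Fixpoint split_fronts (k : nat) (L : seq (seq (bits n))) : seq (bits n) * seq (bits n) :=
  match L with
  | [::] => ([::], [::])
  | F :: L' => if (k <= size F)%N then ([::], F)
               else let: (Y, G) := split_fronts (k - size F) L' in (F ++ Y, G)
  end.

(* a run: populations P t, offspring Q t, extreme points e t, and the value
   nad0 t of y^nad after the hyperplane/fallback step (before the reset) *)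
Variables (P Q : nat -> seq (bits n)).
Variable e : nat -> 'I_m -> option 'rV[R]_m. (* None = (-oo,...,-oo) *)
Variable nad0 : nat -> 'I_m -> R.
Variable tb : 'rV[R]_m -> refidx m p. (* deterministic association rule *)

Definition Rt t := P t ++ Q t.
Definition F1 t := head [::] (fronts (Rt t)).
Definition Yt t := (split_fronts mu (fronts (Rt t))).1.
Definition Gt t := (split_fronts mu (fronts (Rt t))).2.

(* running extremes after the update in generation t (all sets involved are
   nonempty, so the neutral elements fmax / 0 do not affect the values) *)
Definition yminN t j : nat :=
  \big[minn/fmax]_(s < t.+1) \big[minn/fmax]_(x <- Rt s) f x j.
Definition ymaxN t j : nat :=
  \big[maxn/0]_(s < t.+1) \big[maxn/0]_(x <- F1 s) f x j.
Definition maxF1 t j : nat := \big[maxn/0]_(x <- F1 t) f x j.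
Definition maxR t j : nat := \big[maxn/0]_(x <- Rt t) f x j.

Definition objvec (x : bits n) : 'rV[R]_m := \row_j (f x j)%:R.

Definition Eset t : seq (option 'rV[R]_m) :=
  if t is t'.+1 then [seq e t' j | j <- enum 'I_m] else [:: None].
Definition cands t : seq (option 'rV[R]_m) :=
  [seq Some (objvec x) | x <- Yt t ++ Gt t] ++ Eset t.

Definition e_mx t : 'M[R]_m :=
  \matrix_(i, k) (if e t i is Some v then v ord0 k else 0).
Definition axis_meet t (j : 'I_m) (I : R) : Prop :=
  exists lam : 'rV[R]_m, \sum_i lam ord0 i = 1 /\
    I *: (delta_mx ord0 j : 'rV[R]_m) = lam *m e_mx t.
Definition hyper_ok t (I : 'I_m -> R) : Prop :=
  [forall i, e t i != None] /\ row_free (e_mx t) /\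
  forall j, (forall I', axis_meet t j I' <-> I' = I j) /\
            eps <= I j /\ I j <= (ymaxN t j)%:R.
Definition nadir_spec t (nad : 'I_m -> R) : Prop :=
  hyper_ok t nad \/
  ((~ exists I, hyper_ok t I) /\ forall j, nad j = (maxF1 t j)%:R).

Definition ymin t j : R := (yminN t j)%:R.
Definition ynad t j : R :=
  if nad0 t j < ymin t j + eps then (maxR t j)%:R else nad0 t j.
Definition fn t (x : bits n) j : R :=
  let d := ynad t j - ymin t j in
  if d == 0 then 0 else ((f x j)%:R - ymin t j) / d.
Definition fnvec t x : 'rV[R]_m := \row_j fn t x j.

Definition is_ref (a : refidx m p) : bool := (\sum_i (a i : nat) == p)%N.
Definition refs : seq (refidx m p) := [seq a <- enum (refidx m p) | is_ref a].
Definition rvec (a : refidx m p) : 'rV[R]_m := \row_i ((a i : nat)%:R / p%:R).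
Definition dot (u v : 'rV[R]_m) : R := \sum_i u ord0 i * v ord0 i.
Definition dist2 (v r : 'rV[R]_m) : R :=
  \sum_i (v ord0 i - (dot v r / dot r r) * r ord0 i) ^+ 2.
Definition tb_ok : Prop :=
  forall v, is_ref (tb v) /\
    forall a, is_ref a -> dist2 v (rvec (tb v)) <= dist2 v (rvec a).
Definition rp t x := tb (fnvec t x).

(* niching selection: states (rho, chosen indices into F^{i*}, R') *)
Definition nstate := ((refidx m p -> nat) * seq nat * seq (refidx m p))%type.
Definition upd (rho : refidx m p -> nat) r : refidx m p -> nat :=
  fun r' => if r' == r then (rho r).+1 else rho r'.
Definition Gi t i := nth (bits0 n) (Gt t) i.

Inductive nstep t : nstate -> nstate -> Prop :=
| NAdd rho F L r i :
    r \in L -> (forall r', r' \in L -> (rho r <= rho r')%N) ->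
    (i < size (Gt t))%N -> i \notin F -> rp t (Gi t i) = r ->
    (forall i', (i' < size (Gt t))%N -> i' \notin F -> rp t (Gi t i') = r ->
       dist2 (fnvec t (Gi t i)) (rvec r) <= dist2 (fnvec t (Gi t i')) (rvec r)) ->
    nstep t (rho, F, L) (upd rho r, i :: F, L)
| NRem rho F L r :
    r \in L -> (forall r', r' \in L -> (rho r <= rho r')%N) ->
    (forall i, (i < size (Gt t))%N -> i \notin F -> rp t (Gi t i) <> r) ->
    nstep t (rho, F, L) (rho, F, rem r L).

Inductive nreach t : nstate -> nstate -> Prop :=
| NR0 s : nreach t s s
| NRS s1 s2 s3 : nstep t s1 s2 -> nreach t s2 s3 -> nreach t s1 s3.

Definition rho0 t (r : refidx m p) : nat := count (fun x => rp t x == r) (Yt t).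

Definition selection t (Pnext : seq (bits n)) : Prop :=
  exists rho F L, nreach t (rho0 t, [::], refs) (rho, F, L) /\
    (size (Yt t) + size F)%N = mu /\
    Pnext = Yt t ++ [seq Gi t i | i <- F].

(* y is a possible (positive-probability) outcome of standard bit mutation of x *)
Definition mut_ok (x y : bits n) : bool := (n == 1)%N ==> [forall i, y i != x i].

Definition nsga3_run : Prop :=
  forall t,
    size (P t) = mu /\ size (Q t) = mu /\
    (forall y, y \in Q t -> exists2 x, x \in P t & mut_ok x y) /\
    (forall j, e t j \in cands t) /\
    nadir_spec t (nad0 t) /\
    selection t (P t.+1).

End NSGA3.

From HB Require Import structures.
From mathcomp Require Import all_boot all_order all_algebra.
From mathcomp Require Import reals.
From mathcomp Require Import lra.
Import Order.TTheory GRing.Theory Num.Theory.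
Local Open Scope ring_scope.

(* The normalized value of x is (f_j(x) - y^min_j) / (y^nad_j - y^min_j), so it
   lies in [0, 1] as soon as y^min_j <= f_j(x) <= y^nad_j.  The lower bound holds
   because y^min_j is a running minimum over sets containing R_t.  For the upper
   bound, either y^nad_j was reset to max_{R_t} f_j, or y^nad_j >= y^min_j + eps
   >= f_max.  All candidate values of y^nad_j (hyperplane intercepts, which are
   bounded by y^max_j, and maxima of f_j over subsets) are at most f_max, and
   y^min_j >= 0, which gives the bound on y^nad_j - y^min_j. *)

Lemma bigmin_leq_seq (I : eqType) (r : seq I) (F : I -> nat) c i0 :
  i0 \in r -> (\big[minn/c]_(i <- r) F i <= F i0)%N.
Proof.
elim: r => //= a r IH; rewrite in_cons big_cons => /orP [/eqP ->|/IH].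
  exact: geq_minl.
exact/leq_trans/geq_minr.
Qed.

Lemma normalized_ratio_in_unit (R : numFieldType) (a d : R) :
  0 <= a -> a <= d -> 0 <= (if d == 0 then 0 else a / d) <= 1.
Proof.
move=> a_ge0 a_le_d; case: eqP => [_|/eqP d_neq0]; first by rewrite lexx ler01.
have d_gt0 : 0 < d by rewrite lt_neqAle eq_sym d_neq0 (le_trans a_ge0).
by rewrite ler_pdivrMr // mul1r a_le_d andbT divr_ge0 // ltW.
Qed.

Section Bounds.
Context {R : realType} {n m : nat} {f : bits n -> 'I_m -> nat} {eps : R}.
Context {P Q : nat -> seq (bits n)} {e : nat -> 'I_m -> option 'rV[R]_m}.
Context {nad0 : nat -> 'I_m -> R}.

Lemma f_le_fmax x j : (f x j <= fmax f)%N.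
Proof. exact: leq_trans (leq_bigmax j) (leq_bigmax x). Qed.

Lemma bigmax_f_le_fmax (s : seq (bits n)) j :
  (\big[maxn/0]_(x <- s) f x j <= fmax f)%N.
Proof. by apply/bigmax_leqP_seq => x _ _; apply: f_le_fmax. Qed.

Lemma ymaxN_le_fmax t j : (ymaxN f P Q t j <= fmax f)%N.
Proof. by apply/bigmax_leqP => s _; apply: bigmax_f_le_fmax. Qed.

Lemma yminN_le t x j : x \in Rt P Q t -> (yminN f P Q t j <= f x j)%N.
Proof.
move=> xR; rewrite /yminN.
apply: (leq_trans (@bigmin_leq_seq _ _ _ _ (@ord_max t) _)).
  exact: mem_index_enum.
exact: bigmin_leq_seq.
Qed.

Lemma f_le_maxR t x j : x \in Rt P Q t -> (f x j <= maxR f P Q t j)%N.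
Proof. by move=> xR; apply: (@leq_bigmax_seq _ _ xpredT (f^~ j) x xR). Qed.

Lemma nadir_le_fmax t j :
  nadir_spec f eps P Q e t (nad0 t) -> nad0 t j <= (fmax f)%:R.
Proof.
case=> [[_ [_ hyp]] | [_ ->]]; last by rewrite ler_nat bigmax_f_le_fmax.
have [_ [_ le_ymax]] := hyp j.
by apply: le_trans le_ymax _; rewrite ler_nat ymaxN_le_fmax.
Qed.

Lemma ynad_bounds t x j :
  (fmax f)%:R <= eps -> nadir_spec f eps P Q e t (nad0 t) -> x \in Rt P Q t ->
  (f x j)%:R <= ynad f eps P Q nad0 t j /\
  ynad f eps P Q nad0 t j - ymin R f P Q t j <= (fmax f)%:R.
Proof.
move=> fmax_le_eps spec xR; rewrite /ynad /ymin.
have ymin_ge0 : 0 <= (yminN f P Q t j)%:R :> R by [].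
have nad_le := nadir_le_fmax t j spec.
case: ltP => [_ | no_reset].
  have le_max : (f x j)%:R <= (maxR f P Q t j)%:R :> R
    by rewrite ler_nat f_le_maxR.
  have max_le : (maxR f P Q t j)%:R <= (fmax f)%:R :> R
    by rewrite ler_nat bigmax_f_le_fmax.
  split=> //; lra.
have fx_le : (f x j)%:R <= (fmax f)%:R :> R by rewrite ler_nat f_le_fmax.
split; lra.
Qed.

End Bounds.

Theorem lemma1 (R : realType) (n m mu p : nat) (f : bits n -> 'I_m -> nat)
    (eps : R) (P Q : nat -> seq (bits n)) (e : nat -> 'I_m -> option 'rV[R]_m)
    (nad0 : nat -> 'I_m -> R) (tb : 'rV[R]_m -> refidx m p) :
  (1 <= fmax f)%N -> (0 < mu)%N -> (0 < p)%N -> (fmax f)%:R <= eps ->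
  tb_ok tb ->
  nsga3_run mu f eps P Q e nad0 tb ->
  forall (t : nat) (x : bits n) (j : 'I_m),
    x \in Rt P Q t ->
    (0 <= fn f eps P Q nad0 t x j /\ fn f eps P Q nad0 t x j <= 1) /\
    ynad f eps P Q nad0 t j - ymin R f P Q t j <= (fmax f)%:R.
Proof.
move=> _ _ _ fmax_le_eps _ run t x j xR.
have [_ [_ [_ [_ [spec _]]]]] := run t.
have [fx_le_nad width_le] := ynad_bounds _ _ j fmax_le_eps spec xR.
split=> //; apply/andP; rewrite /fn; apply: normalized_ratio_in_unit.
- by rewrite subr_ge0 /ymin ler_nat yminN_le.
- by rewrite lerD2r.
Qed.
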